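(* Let $\alpha=\{a_k\}_{k\ge1}$ be a sequence of positive integers such that $A(m):=\#\{k: a_k=m\}$ satisfies $A(m)=O(m^\nu)$ for some $\nu>0$. Then $\lim_{N\to\infty}E[U_j^N]=I(\alpha;j)<\infty$ for all $j\ge2$.
   Context: For $N\ge2$, coupon type $k\in\{1,\dots,N\}$ has probability $a_k/\sum_{i=1}^Na_i$; $U_j^N$ is the number of empty album places of the $j$-th collector when the first collector completes her set (each collector passes duplicates to the next one), with $$E[U_j^N]=\sum_{k=1}^N\int_0^\infty a_k e^{-a_k t}\frac{(a_kt)^{j-1}}{(j-1)!}\prod_{i\ne k,\,1\le i\le N}\big(1-e^{-a_i t}\big)\,dt.$$ $x_\alpha:=\inf\{x\in[0,1]:\sum_k x^{a_k}=\infty\}$, $L(x;\alpha;j):=\sum_{k}a_k^j\frac{x^{a_k}}{1-x^{a_k}}$, $F(x;\alpha):=\prod_{k}(1-x^{a_k})$, $I(\alpha;j):=\frac{1}{(j-1)!}\int_0^{x_\alpha}L(x;\alpha;j)F(x;\alpha)|\ln x|^{j-1}\frac{dx}{x}$. *)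

From Stdlib Require Import Arith Factorial Reals Lra Lia List ClassicalEpsilon.
Open Scope R_scope.

(* Indexing convention: the paper's a_1, a_2, ... is [a 0], [a 1], ...;
   the first N coupon types are [a 0], ..., [a (N-1)]. *)

(* The limit of a real sequence (chosen classically; meaningful when it converges). *)
Definition Rlim (u : nat -> R) : R :=
  epsilon (inhabits 0) (fun l => Un_cv u l).

(* A(m) restricted to the first n indices: #{k < n : a_k = m}. *)
Definition countA (a : nat -> nat) (m n : nat) : nat :=
  length (filter (fun k => Nat.eqb (a k) m) (seq 0 n)).

(* sum_k x^{a_k} = +infinity  (nonnegative terms: partial sums unbounded) *)
Definition series_diverges (a : nat -> nat) (x : R) : Prop :=
  forall M : R, exists n : nat, M < sum_f_R0 (fun k => x ^ (a k)) n.

Definition is_x_alpha (a : nat -> nat) (xa : R) : Prop :=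
  (forall x, 0 <= x <= 1 -> series_diverges a x -> xa <= x) /\
  (forall b, (forall x, 0 <= x <= 1 -> series_diverges a x -> b <= x) -> b <= xa).

Definition Lfun (a : nat -> nat) (j : nat) (x : R) : R :=
  Rlim (fun n => sum_f_R0 (fun k => INR (a k) ^ j * x ^ (a k) / (1 - x ^ (a k))) n).

Definition Ffun (a : nat -> nat) (x : R) : R :=
  Rlim (fun n => prod_f_R0 (fun k => 1 - x ^ (a k)) n).

Definition I_integrand (a : nat -> nat) (j : nat) (x : R) : R :=
  / INR (fact (j - 1)) * Lfun a j x * Ffun a x * (Rabs (ln x)) ^ (j - 1) / x.

Definition EU_integrand (a : nat -> nat) (j N : nat) (t : R) : R :=
  sum_f_R0 (fun k =>
      INR (a k) * exp (- INR (a k) * t) * (INR (a k) * t) ^ (j - 1) / INR (fact (j - 1))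
      * prod_f_R0 (fun i => if Nat.eq_dec i k then 1 else 1 - exp (- INR (a i) * t)) (N - 1))
    (N - 1).

Definition improper_int (f : R -> R) (a b l : R) : Prop :=
  forall eps, 0 < eps -> exists d, 0 < d /\
    forall u v, a < u -> u < a + d -> b - d < v -> v < b -> u <= v ->
      exists pr : Riemann_integrable f u v, Rabs (RiemannInt pr - l) < eps.

Definition improper_int_inf (f : R -> R) (a l : R) : Prop :=
  forall eps, 0 < eps -> exists T0, forall T, T0 <= T -> a <= T ->
    exists pr : Riemann_integrable f a T, Rabs (RiemannInt pr - l) < eps.

(* Substituting [x = exp (- t)] turns the integrand of [E[U_j^N]] into
   [|ln x|^(j-1) / (j-1)! * L_N(x) * F_N(x) / x], with [L_N] and [F_N] the partial sums and
   products defining [L(x;alpha;j)] and [F(x;alpha)].  Grouping the [a_k] by value and using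
   [A(m) <= C m^p] gives [t^(p+j) * sum_k a_k^j exp (- a_k t) = O(exp (- t/2) / (1 - exp (- t/2)))].
   Hence [sum_k a_k^j x^(a_k)] converges for all [x < 1] (so [x_alpha = 1]) and controls the tails
   of [L_N] and [F_N] uniformly on every [[u, v]] in (0,1), while the integrands are dominated by
   [K exp (- t/2)] uniformly in [N > p + j], i.e. by [K / sqrt x] in the variable [x].  The integrals
   over [[u, v]] therefore converge, and [K / sqrt x] makes the contribution of [(0, u)] and
   [(v, 1)] uniformly small. *)

From Stdlib Require Import Reals Lra Lia List Factorial ClassicalEpsilon.
From Coquelicot Require Import Coquelicot.
Open Scope R_scope.

Lemma Rlim_Un_cv (u : nat -> R) (l : R) : Un_cv u l -> Rlim u = l.
Proof.
  intros Hu. unfold Rlim. apply (UL_sequence u); [| exact Hu].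
  apply (epsilon_spec (inhabits 0) (fun l => Un_cv u l)). now exists l.
Qed.

Lemma Un_cv_const (c : R) : Un_cv (fun _ => c) c.
Proof. intros eps Heps. exists 0%nat. intros n _. unfold Rdist. rewrite Rminus_diag, Rabs_R0. lra. Qed.

Lemma exp_le_compat (x y : R) : x <= y -> exp x <= exp y.
Proof. intros [Hxy | ->]; [left; now apply exp_increasing | lra]. Qed.

Lemma exp_lt_1 (x : R) : x < 0 -> exp x < 1.
Proof. intros Hx. rewrite <- exp_0. now apply exp_increasing. Qed.

Lemma exp_INR_mul (m : nat) (y : R) : exp (INR m * y) = exp y ^ m.
Proof.
  induction m as [| m IH]; [simpl; now rewrite Rmult_0_l, exp_0 |].
  rewrite S_INR, <- tech_pow_Rmult, <- IH, <- exp_plus. f_equal. ring.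
Qed.

Lemma pow_le_1 (t : R) (n : nat) : 0 <= t <= 1 -> t ^ n <= 1.
Proof. intros Ht. rewrite <- (pow1 n). apply pow_incr. lra. Qed.

Lemma pow_le_self (t : R) (n : nat) : (1 <= n)%nat -> 0 <= t <= 1 -> t ^ n <= t.
Proof.
  intros Hn Ht. replace n with (S (n - 1)) by lia. simpl.
  assert (t ^ (n - 1) <= 1) by now apply pow_le_1.
  assert (0 <= t ^ (n - 1)) by (apply pow_le; lra). nra.
Qed.

Lemma sqrt_exp (x : R) : sqrt (exp x) = exp (x / 2).
Proof.
  replace (exp x) with (exp (x / 2) * exp (x / 2)) by (rewrite <- exp_plus; f_equal; field).
  apply sqrt_square. left; apply exp_pos.
Qed.

Lemma sqrt_ge_self (v : R) : 0 <= v <= 1 -> v <= sqrt v.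
Proof.
  intros Hv. destruct (Req_dec v 0) as [-> | Hv0]; [rewrite sqrt_0; lra |].
  assert (0 < sqrt v) by (apply sqrt_lt_R0; lra).
  assert (sqrt v <= 1) by (rewrite <- sqrt_1; apply sqrt_le_1_alt; lra).
  assert (sqrt v * sqrt v = v) by (apply sqrt_sqrt; lra). nra.
Qed.

Lemma sum_f_R0_ge_term (f : nat -> R) (n i : nat) :
  (forall k, 0 <= f k) -> (i <= n)%nat -> f i <= sum_f_R0 f n.
Proof.
  intros Hf Hi. induction n as [| n IH].
  - replace i with 0%nat by lia. simpl. lra.
  - rewrite tech5. assert (0 <= f (S n)) by apply Hf.
    destruct (Nat.eq_dec i (S n)) as [-> |].
    + assert (0 <= sum_f_R0 f n) by (apply cond_pos_sum; auto). lra.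
    + assert (f i <= sum_f_R0 f n) by (apply IH; lia). lra.
Qed.

Lemma pow_le_fact_mul_exp (q : nat) (y : R) : 0 <= y -> y ^ q <= INR (fact q) * exp y.
Proof.
  intros Hy.
  assert (Htaylor := exp_ge_taylor y q Hy).
  assert (Hterm : y ^ q / INR (fact q) <= sum_f_R0 (fun k => y ^ k / INR (fact k)) q).
  { apply (sum_f_R0_ge_term (fun k => y ^ k / INR (fact k))); [| lia].
    intros k. apply Rmult_le_pos; [now apply pow_le |].
    left. apply Rinv_0_lt_compat, INR_fact_lt_0. }
  assert (Hf := INR_fact_lt_0 q).
  replace (y ^ q) with (INR (fact q) * (y ^ q / INR (fact q))) by (field; lra).
  apply Rmult_le_compat_l; lra.
Qed.

Lemma sum_geom_le_inv (r : R) (V : nat) : 0 <= r < 1 -> sum_f_R0 (fun i => r ^ i) V <= / (1 - r).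
Proof.
  intros Hr. rewrite tech3 by lra.
  assert (0 <= r ^ S V) by (apply pow_le; lra).
  unfold Rdiv. rewrite <- (Rmult_1_l (/ (1 - r))) at 2.
  apply Rmult_le_compat_r; [left; apply Rinv_0_lt_compat |]; lra.
Qed.

(* Half of the decay [exp (- m t)] absorbs the polynomial factor [(m t)^q]. *)
Lemma pow_mul_exp_le (q m : nat) (t : R) : 0 <= t ->
  (INR m * t) ^ q * exp (- INR m * t) <= INR (fact q) * 2 ^ q * exp (- t / 2) ^ m.
Proof.
  intros Ht. assert (Hm := pos_INR m).
  rewrite <- exp_INR_mul.
  set (z := exp (INR m * (- t / 2))).
  assert (Hz : 0 < z) by apply exp_pos.
  assert (Hsplit : exp (- INR m * t) = z * z) by (unfold z; rewrite <- exp_plus; f_equal; field).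
  assert (Hinv : exp (INR m * t / 2) * z = 1)
    by (unfold z; rewrite <- exp_plus, <- exp_0; f_equal; field).
  assert (Hpow := pow_le_fact_mul_exp q (INR m * t / 2) ltac:(apply Rmult_le_pos; nra)).
  assert (Hhalf : (INR m * t / 2) ^ q * z <= INR (fact q)).
  { rewrite <- (Rmult_1_r (INR (fact q))), <- Hinv, <- Rmult_assoc.
    apply Rmult_le_compat_r; lra. }
  replace ((INR m * t) ^ q) with (2 ^ q * (INR m * t / 2) ^ q)
    by (rewrite <- Rpow_mult_distr; f_equal; field).
  rewrite Hsplit.
  assert (0 <= 2 ^ q) by (apply pow_le; lra).
  replace (2 ^ q * (INR m * t / 2) ^ q * (z * z)) with (2 ^ q * ((INR m * t / 2) ^ q * z) * z) by ring.
  replace (INR (fact q) * 2 ^ q * z) with (2 ^ q * INR (fact q) * z) by ring.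
  apply Rmult_le_compat_r; [lra |]. now apply Rmult_le_compat_l.
Qed.

Lemma sum_pow_mul_exp_le (q V : nat) (t : R) : (1 <= q)%nat -> 0 < t ->
  t ^ q * sum_f_R0 (fun m => INR m ^ q * exp (- INR m * t)) V <=
  INR (fact q) * 2 ^ q * (exp (- t / 2) / (1 - exp (- t / 2))).
Proof.
  intros Hq Ht.
  set (r := exp (- t / 2)). set (c := INR (fact q) * 2 ^ q).
  assert (Hr0 : 0 < r) by apply exp_pos.
  assert (Hr1 : r < 1) by (apply exp_lt_1; lra).
  assert (Hc : 0 <= c) by (apply Rmult_le_pos; [apply pos_INR | apply pow_le; lra]).
  assert (Hterm : forall m, INR m ^ q * exp (- INR m * t) * t ^ q <= c * r ^ m).
  { intros m. eapply Rle_trans; [| now apply pow_mul_exp_le; lra].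
    right. rewrite Rpow_mult_distr. ring. }
  assert (H0 : INR 0 ^ q * exp (- INR 0 * t) * t ^ q = 0) by (destruct q; [lia | simpl; ring]).
  rewrite scal_sum. destruct V as [| V].
  - unfold sum_f_R0. rewrite H0. apply Rmult_le_pos; [lra |]. left. apply Rdiv_lt_0_compat; lra.
  - rewrite decomp_sum by lia. cbv beta. rewrite H0, Rplus_0_l. simpl pred.
    apply Rle_trans with (sum_f_R0 (fun i => r ^ i) V * (c * r)).
    + rewrite Rmult_comm, scal_sum. apply sum_Rle. intros i _.
      replace (r ^ i * (c * r)) with (c * r ^ S i) by (simpl; ring). apply Hterm.
    + replace (c * (r / (1 - r))) with (/ (1 - r) * (c * r)) by (field; lra).
      apply Rmult_le_compat_r; [nra |]. apply sum_geom_le_inv; lra.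
Qed.
Lemma pow_eq_exp_ln (x : R) (n : nat) : 0 < x -> x ^ n = exp (- INR n * - ln x).
Proof. intros Hx. rewrite <- Rpower_pow by lra. unfold Rpower. f_equal. ring. Qed.

Lemma mul_exp_half_ratio_le (t : R) : 0 < t -> t * (exp (- t / 2) / (1 - exp (- t / 2))) <= 2.
Proof.
  intros Ht. set (r := exp (- t / 2)).
  assert (Hr1 : r < 1) by (apply exp_lt_1; lra).
  assert (Hr0 : 0 < r) by apply exp_pos.
  assert (H1 := exp_ineq1_le (t / 2)).
  assert (H2 : r * exp (t / 2) = 1) by (unfold r; rewrite <- exp_plus, <- exp_0; f_equal; field).
  assert (H3 : r * (1 + t / 2) <= 1) by (rewrite <- H2; apply Rmult_le_compat_l; lra).
  unfold Rdiv. rewrite <- Rmult_assoc.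
  apply Rmult_le_reg_r with (1 - r); [lra |].
  rewrite Rmult_assoc, Rinv_l by lra. lra.
Qed.

Lemma countA_S (a : nat -> nat) (m n : nat) :
  countA a m (S n) = (countA a m n + (if Nat.eqb (a n) m then 1 else 0))%nat.
Proof.
  unfold countA. rewrite seq_S, filter_app, length_app. simpl.
  destruct (Nat.eqb (a n) m); simpl; lia.
Qed.

Lemma sum_indicator (phi : nat -> R) (c V : nat) :
  sum_f_R0 (fun m => (if Nat.eqb c m then 1 else 0) * phi m) V =
  if Nat.leb c V then phi c else 0.
Proof.
  induction V as [| V IH].
  - destruct c; simpl; ring.
  - rewrite tech5, IH.
    destruct (Nat.eqb c (S V)) eqn:Ec.
    + apply Nat.eqb_eq in Ec. subst c.
      replace (Nat.leb (S V) V) with false by (symmetry; apply Nat.leb_gt; lia).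
      replace (Nat.leb (S V) (S V)) with true by (symmetry; apply Nat.leb_le; lia). ring.
    + apply Nat.eqb_neq in Ec. replace (Nat.leb c (S V)) with (Nat.leb c V).
      * ring.
      * destruct (Nat.leb c V) eqn:E; symmetry;
          [apply Nat.leb_le in E; apply Nat.leb_le | apply Nat.leb_gt in E; apply Nat.leb_gt]; lia.
Qed.

Lemma sum_f_R0_by_value (a : nat -> nat) (phi : nat -> R) (n V : nat) :
  (forall k, (k <= n)%nat -> (a k <= V)%nat) ->
  sum_f_R0 (fun k => phi (a k)) n = sum_f_R0 (fun m => INR (countA a m (S n)) * phi m) V.
Proof.
  assert (Hstep : forall n,
    sum_f_R0 (fun m => INR (countA a m (S n)) * phi m) V =
    sum_f_R0 (fun m => INR (countA a m n) * phi m) V +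
    sum_f_R0 (fun m => (if Nat.eqb (a n) m then 1 else 0) * phi m) V).
  { intros n0. rewrite <- plus_sum. apply sum_eq. intros m _.
    rewrite countA_S, plus_INR. destruct (Nat.eqb (a n0) m); rewrite ?INR_1, ?INR_0; ring. }
  induction n as [| n IH]; intros Ha; rewrite Hstep, sum_indicator.
  - replace (Nat.leb (a 0%nat) V) with true by (symmetry; apply Nat.leb_le, Ha; lia).
    rewrite (sum_eq_R0 (fun m => INR (countA a m 0) * phi m)); [simpl; ring |].
    intros m _. unfold countA. simpl. ring.
  - replace (Nat.leb (a (S n)) V) with true by (symmetry; apply Nat.leb_le, Ha; lia).
    rewrite tech5, IH by (intros; apply Ha; lia). reflexivity.
Qed.

Lemma nat_fun_bounded (a : nat -> nat) (n : nat) : exists V, forall k, (k <= n)%nat -> (a k <= V)%nat.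
Proof.
  induction n as [| n [V HV]]; [exists (a 0%nat); intros k Hk; replace k with 0%nat by lia; lia |].
  exists (Nat.max V (a (S n))). intros k Hk.
  destruct (Nat.eq_dec k (S n)) as [-> | Hne]; [lia |]. specialize (HV k ltac:(lia)). lia.
Qed.

Definition expsum (a : nat -> nat) (j : nat) (t : R) (n : nat) : R :=
  sum_f_R0 (fun k => INR (a k) ^ j * exp (- INR (a k) * t)) n.

Definition moment_sum (a : nat -> nat) (j : nat) (v : R) (n : nat) : R :=
  sum_f_R0 (fun k => INR (a k) ^ j * v ^ (a k)) n.

Lemma expsum_ge0 (a : nat -> nat) (j : nat) (t : R) (n : nat) : 0 <= expsum a j t n.
Proof.
  apply cond_pos_sum. intros k. apply Rmult_le_pos; [apply pow_le, pos_INR | left; apply exp_pos].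
Qed.

Lemma moment_sum_expsum (a : nat -> nat) (j : nat) (v : R) (n : nat) :
  0 < v -> moment_sum a j v n = expsum a j (- ln v) n.
Proof. intros Hv. apply sum_eq. intros k _. now rewrite (pow_eq_exp_ln v). Qed.

Section PolynomialMultiplicity.

Variables (a : nat -> nat) (C : R) (p : nat).
Hypothesis a_pos : forall k, (0 < a k)%nat.
Hypothesis C_ge0 : 0 <= C.
Hypothesis countA_le : forall m n, (1 <= m)%nat -> INR (countA a m n) <= C * INR m ^ p.

Lemma count_constant_ge0 (q : nat) : 0 <= C * INR (fact q) * 2 ^ q.
Proof. apply Rmult_le_pos; [apply Rmult_le_pos; [exact C_ge0 | apply pos_INR] | apply pow_le; lra]. Qed.

Lemma expsum_le (j : nat) (t : R) (n : nat) : (1 <= j)%nat -> 0 < t ->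
  t ^ (p + j) * expsum a j t n <=
  C * INR (fact (p + j)) * 2 ^ (p + j) * (exp (- t / 2) / (1 - exp (- t / 2))).
Proof.
  intros Hj Ht. destruct (nat_fun_bounded a n) as [V HV].
  unfold expsum. rewrite (sum_f_R0_by_value a (fun m => INR m ^ j * exp (- INR m * t)) n V HV).
  assert (Hcount : sum_f_R0 (fun m => INR (countA a m (S n)) * (INR m ^ j * exp (- INR m * t))) V <=
     C * sum_f_R0 (fun m => INR m ^ (p + j) * exp (- INR m * t)) V).
  { rewrite scal_sum. apply sum_Rle. intros [| m] _.
    - change (INR 0) with 0. rewrite !pow_i by lia. right; ring.
    - assert (Hc := countA_le (S m) (S n) ltac:(lia)).
      assert (0 <= INR (S m) ^ j * exp (- INR (S m) * t))
        by (apply Rmult_le_pos; [apply pow_le, pos_INR | left; apply exp_pos]).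
      rewrite pow_add.
      replace (INR (S m) ^ p * INR (S m) ^ j * exp (- INR (S m) * t) * C) with
        (C * INR (S m) ^ p * (INR (S m) ^ j * exp (- INR (S m) * t))) by ring.
      apply Rmult_le_compat_r; lra. }
  assert (Htpow : 0 <= t ^ (p + j)) by (apply pow_le; lra).
  eapply Rle_trans; [apply Rmult_le_compat_l; [exact Htpow | exact Hcount] |].
  rewrite !Rmult_assoc, <- (Rmult_assoc (t ^ (p + j))), (Rmult_comm (t ^ (p + j))), Rmult_assoc.
  apply Rmult_le_compat_l; [exact C_ge0 |].
  rewrite <- Rmult_assoc. apply sum_pow_mul_exp_le; [lia | exact Ht].
Qed.

Lemma expsum_le_near0 (j : nat) (t : R) (n : nat) : (1 <= j)%nat -> 0 <= t ->
  t ^ S (p + j) * expsum a j t n <= 2 * (C * INR (fact (p + j)) * 2 ^ (p + j)).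
Proof.
  intros Hj Ht.
  set (Q := C * INR (fact (p + j)) * 2 ^ (p + j)).
  assert (HQ : 0 <= Q) by apply count_constant_ge0.
  destruct Ht as [Ht | <-]; [| rewrite pow_i by lia; lra].
  assert (Hb := expsum_le j t n Hj Ht). fold Q in Hb.
  assert (Hratio := mul_exp_half_ratio_le t Ht).
  rewrite <- tech_pow_Rmult, Rmult_assoc.
  apply Rle_trans with (t * (Q * (exp (- t / 2) / (1 - exp (- t / 2))))).
  - apply Rmult_le_compat_l; lra.
  - replace (t * (Q * (exp (- t / 2) / (1 - exp (- t / 2))))) with
      (Q * (t * (exp (- t / 2) / (1 - exp (- t / 2))))) by ring.
    rewrite (Rmult_comm 2). now apply Rmult_le_compat_l.
Qed.

Lemma expsum_le_tail (j : nat) (t : R) (n : nat) : (1 <= j)%nat -> 1 <= t ->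
  t ^ (p + j) * expsum a j t n <=
  C * INR (fact (p + j)) * 2 ^ (p + j) / (1 - exp (- 1 / 2)) * exp (- t / 2).
Proof.
  intros Hj Ht.
  set (Q := C * INR (fact (p + j)) * 2 ^ (p + j)).
  assert (HQ : 0 <= Q) by apply count_constant_ge0.
  assert (Hb := expsum_le j t n Hj ltac:(lra)). fold Q in Hb.
  assert (Hr := exp_le_compat (- t / 2) (- 1 / 2) ltac:(lra)).
  assert (Hc1 : exp (- 1 / 2) < 1) by (apply exp_lt_1; lra).
  assert (Hr0 := exp_pos (- t / 2)).
  eapply Rle_trans; [exact Hb |].
  replace (Q / (1 - exp (- 1 / 2)) * exp (- t / 2)) with (Q * (exp (- t / 2) / (1 - exp (- 1 / 2))))
    by (field; lra).
  apply Rmult_le_compat_l; [exact HQ |]. apply Rmult_le_compat_l; [lra |]. apply Rinv_le_contravar; lra.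
Qed.

Lemma moment_sum_cv (j : nat) (v : R) : (1 <= j)%nat -> 0 < v < 1 ->
  {W | Un_cv (moment_sum a j v) W}.
Proof.
  intros Hj Hv. apply growing_cv.
  - intros n. unfold moment_sum. simpl.
    assert (0 <= INR (a (S n)) ^ j * v ^ a (S n)) by (apply Rmult_le_pos; apply pow_le; [apply pos_INR | lra]).
    lra.
  - set (t := - ln v).
    assert (Ht : 0 < t) by (unfold t; assert (ln v < 0) by (rewrite <- ln_1; apply ln_increasing; lra); lra).
    assert (Htq : 0 < t ^ (p + j)) by (apply pow_lt; lra).
    exists (C * INR (fact (p + j)) * 2 ^ (p + j) * (exp (- t / 2) / (1 - exp (- t / 2))) / t ^ (p + j)).
    intros y [n ->]. rewrite moment_sum_expsum by lra.
    apply Rmult_le_reg_l with (t ^ (p + j)); [exact Htq |].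
    unfold Rdiv. rewrite (Rmult_comm _ (/ _)), <- Rmult_assoc, Rinv_r, Rmult_1_l by lra.
    now apply expsum_le.
Qed.

(* The coupon weights grow at most polynomially, so [sum_k x^(a k)] converges on [0,1). *)
Lemma x_alpha_eq_1 (xa : R) : is_x_alpha a xa -> xa = 1.
Proof.
  intros [Hlow Hgreatest]. apply Rle_antisym.
  - apply Hlow; [lra |]. intros M. destruct (INR_unbounded M) as [n Hn]. exists n.
    rewrite (sum_eq _ (fun _ => 1)) by (intros; apply pow1). rewrite sum_cte, S_INR. lra.
  - apply Hgreatest. intros x Hx Hdiv. destruct (Rle_lt_dec 1 x) as [Hle | Hlt]; [exact Hle | exfalso].
    destruct (Req_dec x 0) as [-> | Hx0].
    + destruct (Hdiv 0) as [n Hn]. rewrite sum_eq_R0 in Hn; [lra |].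
      intros k _. apply pow_i, a_pos.
    + destruct (moment_sum_cv 1 x (le_n 1) ltac:(lra)) as [W HW].
      destruct (Hdiv W) as [n Hn].
      assert (sum_f_R0 (fun k => x ^ a k) n <= moment_sum a 1 x n).
      { apply sum_Rle. intros k _. rewrite pow_1. rewrite <- (Rmult_1_l (x ^ a k)) at 1.
        apply Rmult_le_compat_r; [apply pow_le; lra |].
        assert (Hk := a_pos k). apply le_INR in Hk. simpl in Hk. lra. }
      assert (moment_sum a 1 x n <= W).
      { apply sum_incr; [exact HW |]. intros k. apply Rmult_le_pos; apply pow_le; [apply pos_INR | lra]. }
      lra.
Qed.

End PolynomialMultiplicity.

Lemma prod_f_R0_unit_interval (c : nat -> R) (n : nat) :
  (forall i, 0 <= c i <= 1) -> 0 <= prod_f_R0 c n <= 1.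
Proof.
  intros Hc. induction n as [| n IH]; simpl; [apply Hc |].
  destruct (Hc (S n)). split; [apply Rmult_le_pos; lra |].
  rewrite <- (Rmult_1_l 1). apply Rmult_le_compat; lra.
Qed.

Lemma prod_f_R0_antitone (c : nat -> R) (m n : nat) :
  (forall i, 0 <= c i <= 1) -> (m <= n)%nat -> prod_f_R0 c n <= prod_f_R0 c m.
Proof.
  intros Hc Hmn. induction Hmn as [| n Hmn IH]; [lra |]. simpl.
  destruct (prod_f_R0_unit_interval c n Hc). destruct (Hc (S n)).
  apply Rle_trans with (prod_f_R0 c n); [| exact IH].
  rewrite <- (Rmult_1_r (prod_f_R0 c n)) at 2. apply Rmult_le_compat_l; lra.
Qed.

Lemma prod_f_R0_le_pow (c : nat -> R) (b : R) (M : nat) :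
  (forall i, (i <= M)%nat -> 0 <= c i <= b) -> prod_f_R0 c M <= b ^ S M.
Proof.
  induction M as [| M IH]; intros Hc; [simpl; rewrite Rmult_1_r; apply Hc; lia |].
  assert (HM := Hc (S M) (le_n _)).
  assert (0 <= prod_f_R0 c M) by (apply prod_SO_pos; intros i Hi; apply Hc; lia).
  change (prod_f_R0 c M * c (S M) <= b * b ^ S M). rewrite (Rmult_comm b).
  apply Rmult_le_compat; try lra. apply IH. intros i Hi. apply Hc. lia.
Qed.

Lemma prod_f_R0_le_pow_skip (c : nat -> R) (b : R) (k M n : nat) :
  (forall i, 0 <= c i <= 1) -> (forall i, (i <= M)%nat -> i <> k -> c i <= b) -> (M <= n)%nat ->
  prod_f_R0 c n <= b ^ M.
Proof.
  intros Hc Hb HMn. apply Rle_trans with (prod_f_R0 c M); [now apply prod_f_R0_antitone |].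
  clear n HMn. induction M as [| M IH]; [simpl; apply Hc |].
  destruct (prod_f_R0_unit_interval c M Hc). destruct (Hc (S M)).
  change (prod_f_R0 c M * c (S M) <= b ^ S M).
  destruct (Nat.eq_dec (S M) k) as [<- | Hk].
  - apply Rle_trans with (prod_f_R0 c M).
    + rewrite <- (Rmult_1_r (prod_f_R0 c M)) at 2. apply Rmult_le_compat_l; lra.
    + apply prod_f_R0_le_pow. intros i Hi. split; [apply Hc | apply Hb; lia].
  - rewrite <- tech_pow_Rmult, Rmult_comm.
    apply Rmult_le_compat; try lra; [apply Hb; lia |]. apply IH. intros i Hi Hik. apply Hb; lia.
Qed.

Definition skip_factor (a : nat -> nat) (k : nat) (t : R) (i : nat) : R :=
  if Nat.eq_dec i k then 1 else 1 - exp (- INR (a i) * t).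

Lemma skip_factor_unit_interval (a : nat -> nat) (k : nat) (t : R) (i : nat) :
  0 <= t -> 0 <= skip_factor a k t i <= 1.
Proof.
  intros Ht. unfold skip_factor. destruct (Nat.eq_dec i k); [lra |].
  assert (exp (- INR (a i) * t) <= 1)
    by (rewrite <- exp_0; apply exp_le_compat; assert (0 <= INR (a i)) by apply pos_INR; nra).
  assert (0 < exp (- INR (a i) * t)) by apply exp_pos. lra.
Qed.

Lemma EU_integrand_eq (a : nat -> nat) (j N : nat) (t : R) : (1 <= j)%nat ->
  EU_integrand a j N t =
  sum_f_R0 (fun k => INR (a k) ^ j * exp (- INR (a k) * t) *
    (t ^ (j - 1) / INR (fact (j - 1)) * prod_f_R0 (skip_factor a k t) (N - 1))) (N - 1).
Proof.
  intros Hj. destruct j as [| j]; [lia |]. unfold EU_integrand. rewrite !Nat.sub_succ, !Nat.sub_0_r.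
  apply sum_eq. intros k _. unfold skip_factor.
  rewrite Rpow_mult_distr, <- tech_pow_Rmult. field. apply INR_fact_neq_0.
Qed.

Lemma EU_integrand_ge0 (a : nat -> nat) (j N : nat) (t : R) : (1 <= j)%nat -> 0 <= t ->
  0 <= EU_integrand a j N t.
Proof.
  intros Hj Ht. rewrite EU_integrand_eq by exact Hj.
  apply cond_pos_sum. intros k.
  assert (Hf := INR_fact_lt_0 (j - 1)).
  apply Rmult_le_pos; [apply Rmult_le_pos; [apply pow_le, pos_INR | left; apply exp_pos] |].
  apply Rmult_le_pos.
  - apply Rmult_le_pos; [apply pow_le; lra | left; apply Rinv_0_lt_compat; lra].
  - apply prod_f_R0_unit_interval. intros i. now apply skip_factor_unit_interval.
Qed.

Lemma EU_integrand_le (a : nat -> nat) (j N : nat) (t P : R) : (1 <= j)%nat -> 0 <= t ->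
  (forall k, (k <= N - 1)%nat -> prod_f_R0 (skip_factor a k t) (N - 1) <= P) ->
  EU_integrand a j N t <= t ^ (j - 1) * P / INR (fact (j - 1)) * expsum a j t (N - 1).
Proof.
  intros Hj Ht HP. rewrite EU_integrand_eq by exact Hj.
  assert (Hf := INR_fact_lt_0 (j - 1)).
  unfold expsum. rewrite scal_sum. apply sum_Rle. intros k Hk.
  apply Rmult_le_compat_l; [apply Rmult_le_pos; [apply pow_le, pos_INR | left; apply exp_pos] |].
  replace (t ^ (j - 1) * P / INR (fact (j - 1))) with (t ^ (j - 1) / INR (fact (j - 1)) * P)
    by (field; lra).
  apply Rmult_le_compat_l; [apply Rmult_le_pos; [apply pow_le; lra | left; apply Rinv_0_lt_compat; lra] |].
  now apply HP.
Qed.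

Lemma EU_integrand_le_near0 (a : nat -> nat) (j N : nat) (t : R) : (1 <= j)%nat -> 0 <= t <= 1 ->
  EU_integrand a j N t <= sum_f_R0 (fun k => INR (a k) ^ j) (N - 1) / INR (fact (j - 1)).
Proof.
  intros Hj Ht.
  assert (Hf := INR_fact_lt_0 (j - 1)).
  eapply Rle_trans; [apply (EU_integrand_le a j N t 1 Hj ltac:(lra)) |].
  { intros k _. apply prod_f_R0_unit_interval. intros i. apply skip_factor_unit_interval; lra. }
  assert (Hexp : expsum a j t (N - 1) <= sum_f_R0 (fun k => INR (a k) ^ j) (N - 1)).
  { apply sum_Rle. intros k _. assert (0 <= INR (a k) ^ j) by apply pow_le, pos_INR.
    assert (exp (- INR (a k) * t) <= 1)
      by (rewrite <- exp_0; apply exp_le_compat; assert (0 <= INR (a k)) by apply pos_INR; nra).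
    rewrite <- (Rmult_1_r (INR (a k) ^ j)) at 2. apply Rmult_le_compat_l; lra. }
  assert (Ht1 : t ^ (j - 1) <= 1) by (apply pow_le_1; lra).
  assert (0 <= t ^ (j - 1)) by (apply pow_le; lra).
  assert (0 <= expsum a j t (N - 1)) by apply expsum_ge0.
  unfold Rdiv. rewrite Rmult_1_r.
  replace (t ^ (j - 1) * / INR (fact (j - 1)) * expsum a j t (N - 1))
    with (/ INR (fact (j - 1)) * (t ^ (j - 1) * expsum a j t (N - 1))) by ring.
  rewrite (Rmult_comm (sum_f_R0 _ _)).
  apply Rmult_le_compat_l; [left; apply Rinv_0_lt_compat; lra |].
  rewrite <- (Rmult_1_l (sum_f_R0 _ _)). apply Rmult_le_compat; lra.
Qed.

Lemma le_exp_half_of_bounds (f : R -> R) (c K : R) : 0 <= c -> 0 <= K ->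
  (forall t, 0 <= t <= 1 -> f t <= c) -> (forall t, 1 <= t -> f t <= K * exp (- t / 2)) ->
  forall t, 0 <= t -> f t <= (c * exp (1 / 2) + K) * exp (- t / 2).
Proof.
  intros Hc HK Hnear Htail t Ht.
  assert (Hr := exp_pos (- t / 2)). assert (Hh := exp_pos (1 / 2)).
  destruct (Rle_lt_dec t 1) as [Ht1 | Ht1].
  - assert (Hge : 1 <= exp (1 / 2) * exp (- t / 2))
      by (rewrite <- exp_plus, <- exp_0 at 1; apply exp_le_compat; lra).
    assert (c <= c * (exp (1 / 2) * exp (- t / 2))) by (rewrite <- (Rmult_1_r c) at 1; now apply Rmult_le_compat_l).
    assert (0 <= K * exp (- t / 2)) by (apply Rmult_le_pos; lra).
    specialize (Hnear t ltac:(lra)). lra.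
  - assert (0 <= c * exp (1 / 2) * exp (- t / 2)) by (apply Rmult_le_pos; [apply Rmult_le_pos |]; lra).
    specialize (Htail t ltac:(lra)). lra.
Qed.

Section CouponDomination.

Variables (a : nat -> nat) (C : R) (p : nat).
Hypothesis C_ge0 : 0 <= C.
Hypothesis countA_le : forall m n, (1 <= m)%nat -> INR (countA a m n) <= C * INR m ^ p.

Lemma EU_integrand_le_tail (j N : nat) (t : R) : (1 <= j)%nat -> 1 <= t ->
  EU_integrand a j N t <=
  C * INR (fact (p + j)) * 2 ^ (p + j) / (1 - exp (- 1 / 2)) / INR (fact (j - 1)) * exp (- t / 2).
Proof.
  intros Hj Ht.
  assert (Hf := INR_fact_lt_0 (j - 1)).
  eapply Rle_trans; [apply (EU_integrand_le a j N t 1 Hj ltac:(lra)) |].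
  { intros k _. apply prod_f_R0_unit_interval. intros i. apply skip_factor_unit_interval; lra. }
  assert (Hpow : t ^ (j - 1) <= t ^ (p + j)) by (apply Rle_pow; [lra | lia]).
  assert (Htail := expsum_le_tail a C p C_ge0 countA_le j t (N - 1) Hj Ht).
  assert (0 <= expsum a j t (N - 1)) by apply expsum_ge0.
  apply Rle_trans with (t ^ (p + j) * expsum a j t (N - 1) / INR (fact (j - 1))).
  - unfold Rdiv. rewrite Rmult_1_r, !Rmult_assoc, (Rmult_comm (/ _)), <- !Rmult_assoc.
    apply Rmult_le_compat_r; [left; apply Rinv_0_lt_compat; lra |].
    now apply Rmult_le_compat_r.
  - assert (exp (- 1 / 2) < 1) by (apply exp_lt_1; lra).
    replace (C * INR (fact (p + j)) * 2 ^ (p + j) / (1 - exp (- 1 / 2)) / INR (fact (j - 1)) * exp (- t / 2))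
      with (C * INR (fact (p + j)) * 2 ^ (p + j) / (1 - exp (- 1 / 2)) * exp (- t / 2) / INR (fact (j - 1)))
      by (field; lra).
    unfold Rdiv in *. apply Rmult_le_compat_r; [left; apply Rinv_0_lt_compat; lra | exact Htail].
Qed.

(* Near [0] the [p + j] factors [1 - exp (- a_i t) <= a_i t] with [i <= p + j], [i <> k], make
   up for the blow-up [t^-(p + j + 1)] of [expsum]; this needs [N > p + j]. *)
Lemma EU_integrand_le_near0_uniform (j N : nat) (t : R) :
  (2 <= j)%nat -> (S (p + j) <= N)%nat -> 0 <= t <= 1 ->
  EU_integrand a j N t <=
  sum_f_R0 (fun i => INR (a i)) (p + j) ^ (p + j) *
  (2 * (C * INR (fact (p + j)) * 2 ^ (p + j))) / INR (fact (j - 1)).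
Proof.
  intros Hj HN Ht.
  set (M := (p + j)%nat). set (B := sum_f_R0 (fun i => INR (a i)) M).
  assert (Hf := INR_fact_lt_0 (j - 1)).
  assert (HB : 0 <= B) by (apply cond_pos_sum; intros; apply pos_INR).
  eapply Rle_trans; [apply (EU_integrand_le a j N t ((B * t) ^ M) ltac:(lia) ltac:(lra)) |].
  { intros k _. apply (prod_f_R0_le_pow_skip _ _ k M).
    - intros i. apply skip_factor_unit_interval; lra.
    - intros i Hi Hik. unfold skip_factor. destruct (Nat.eq_dec i k) as [| _]; [contradiction |].
      assert (Hexp := exp_ineq1_le (- INR (a i) * t)).
      assert (HaB : INR (a i) <= B)
        by (apply (sum_f_R0_ge_term (fun i => INR (a i))); [intros; apply pos_INR | exact Hi]).
      assert (INR (a i) * t <= B * t) by (apply Rmult_le_compat_r; lra). lra.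
    - unfold M. lia. }
  assert (Hnear := expsum_le_near0 a C p C_ge0 countA_le j t (N - 1) ltac:(lia) ltac:(lra)).
  fold M in Hnear.
  assert (Hpow : t ^ (j - 1) <= t) by (apply pow_le_self; [lia | lra]).
  assert (0 <= expsum a j t (N - 1)) by apply expsum_ge0.
  assert (0 <= t ^ M) by (apply pow_le; lra).
  assert (HBM : 0 <= B ^ M) by (apply pow_le; lra).
  assert (Hf' : 0 < / INR (fact (j - 1))) by (apply Rinv_0_lt_compat; lra).
  apply Rle_trans with (B ^ M * (t ^ S M * expsum a j t (N - 1)) / INR (fact (j - 1))).
  - rewrite Rpow_mult_distr.
    replace (t ^ (j - 1) * (B ^ M * t ^ M) / INR (fact (j - 1)) * expsum a j t (N - 1))
      with (B ^ M * (t ^ (j - 1) * t ^ M * expsum a j t (N - 1)) / INR (fact (j - 1))) by (field; lra).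
    unfold Rdiv. apply Rmult_le_compat_r; [lra |]. apply Rmult_le_compat_l; [exact HBM |].
    rewrite <- tech_pow_Rmult. apply Rmult_le_compat_r; [lra |]. now apply Rmult_le_compat_r.
  - unfold Rdiv. apply Rmult_le_compat_r; [lra |]. now apply Rmult_le_compat_l.
Qed.

Lemma EU_integrand_exp_dominated_uniform (j : nat) : (2 <= j)%nat ->
  exists K, 0 <= K /\ forall N t, (S (p + j) <= N)%nat -> 0 <= t ->
    EU_integrand a j N t <= K * exp (- t / 2).
Proof.
  intros Hj.
  set (c := sum_f_R0 (fun i => INR (a i)) (p + j) ^ (p + j) *
    (2 * (C * INR (fact (p + j)) * 2 ^ (p + j))) / INR (fact (j - 1))).
  set (K := C * INR (fact (p + j)) * 2 ^ (p + j) / (1 - exp (- 1 / 2)) / INR (fact (j - 1))).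
  assert (Hf := INR_fact_lt_0 (j - 1)).
  assert (HQ := count_constant_ge0 C C_ge0 (p + j)).
  assert (Hc1 : exp (- 1 / 2) < 1) by (apply exp_lt_1; lra).
  assert (Hc : 0 <= c).
  { apply Rmult_le_pos; [| left; apply Rinv_0_lt_compat; lra].
    apply Rmult_le_pos; [apply pow_le, cond_pos_sum; intros; apply pos_INR | lra]. }
  assert (HK : 0 <= K).
  { apply Rmult_le_pos; [| left; apply Rinv_0_lt_compat; lra].
    apply Rmult_le_pos; [lra | left; apply Rinv_0_lt_compat; lra]. }
  exists (c * exp (1 / 2) + K). split; [assert (0 < exp (1 / 2)) by apply exp_pos; nra |].
  intros N t HN Ht. apply (le_exp_half_of_bounds (EU_integrand a j N) c K Hc HK); [| | exact Ht].
  - intros s Hs. now apply EU_integrand_le_near0_uniform.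
  - intros s Hs. apply EU_integrand_le_tail; [lia | exact Hs].
Qed.

Lemma EU_integrand_exp_dominated (j N : nat) : (1 <= j)%nat ->
  exists K, 0 <= K /\ forall t, 0 <= t -> EU_integrand a j N t <= K * exp (- t / 2).
Proof.
  intros Hj.
  set (c := sum_f_R0 (fun k => INR (a k) ^ j) (N - 1) / INR (fact (j - 1))).
  set (K := C * INR (fact (p + j)) * 2 ^ (p + j) / (1 - exp (- 1 / 2)) / INR (fact (j - 1))).
  assert (Hf := INR_fact_lt_0 (j - 1)).
  assert (HQ := count_constant_ge0 C C_ge0 (p + j)).
  assert (Hc1 : exp (- 1 / 2) < 1) by (apply exp_lt_1; lra).
  assert (Hc : 0 <= c).
  { apply Rmult_le_pos; [| left; apply Rinv_0_lt_compat; lra].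
    apply cond_pos_sum. intros. apply pow_le, pos_INR. }
  assert (HK : 0 <= K).
  { apply Rmult_le_pos; [| left; apply Rinv_0_lt_compat; lra].
    apply Rmult_le_pos; [lra | left; apply Rinv_0_lt_compat; lra]. }
  exists (c * exp (1 / 2) + K). split; [assert (0 < exp (1 / 2)) by apply exp_pos; nra |].
  apply (le_exp_half_of_bounds (EU_integrand a j N) c K Hc HK).
  - intros s Hs. now apply EU_integrand_le_near0.
  - intros s Hs. now apply EU_integrand_le_tail.
Qed.

End CouponDomination.

Lemma Un_cv_of_increments_dominated (u s : nat -> R) (W : R) : Un_cv s W ->
  (forall m, Rabs (u (S m) - u m) <= s (S m) - s m) ->
  exists l, Un_cv u l /\ forall n, Rabs (l - u n) <= W - s n.
Proof.
  intros Hs Hinc.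
  assert (Htele : forall n m, (n <= m)%nat -> Rabs (u m - u n) <= s m - s n).
  { intros n m Hnm. induction Hnm as [| m Hnm IH]; [rewrite !Rminus_diag, Rabs_R0; lra |].
    replace (u (S m) - u n) with ((u (S m) - u m) + (u m - u n)) by ring.
    eapply Rle_trans; [apply Rabs_triang |]. specialize (Hinc m). lra. }
  assert (Hcauchy : Cauchy_crit u).
  { intros eps Heps. destruct (CV_Cauchy s (exist _ W Hs) eps Heps) as [N HN].
    exists N. intros n m Hn Hm. unfold Rdist in *.
    destruct (Nat.le_ge_cases n m) as [Hnm | Hmn].
    - rewrite Rabs_minus_sym. eapply Rle_lt_trans; [now apply Htele |].
      eapply Rle_lt_trans; [apply Rle_abs | now apply HN].
    - eapply Rle_lt_trans; [now apply Htele |].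
      eapply Rle_lt_trans; [apply Rle_abs | now apply HN]. }
  destruct (Rcomplete.R_complete u Hcauchy) as [l Hl].
  exists l. split; [exact Hl |]. intros n.
  apply Rle_plus_epsilon. intros eps Heps.
  destruct (Hl (eps / 2) ltac:(lra)) as [N1 H1].
  destruct (Hs (eps / 2) ltac:(lra)) as [N2 H2].
  set (m := Nat.max n (Nat.max N1 N2)).
  specialize (H1 m ltac:(unfold m; lia)). specialize (H2 m ltac:(unfold m; lia)).
  specialize (Htele n m ltac:(unfold m; lia)). unfold Rdist in *.
  replace (l - u n) with ((l - u m) + (u m - u n)) by ring.
  eapply Rle_trans; [apply Rabs_triang |]. rewrite Rabs_minus_sym in H1.
  assert (s m - W <= eps / 2) by (eapply Rle_trans; [apply Rle_abs | lra]). lra.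
Qed.

Definition Lpart (a : nat -> nat) (j n : nat) (x : R) : R :=
  sum_f_R0 (fun k => INR (a k) ^ j * x ^ (a k) / (1 - x ^ (a k))) n.

Definition Fpart (a : nat -> nat) (n : nat) (x : R) : R :=
  prod_f_R0 (fun k => 1 - x ^ (a k)) n.

Section InfiniteProduct.

Variables (a : nat -> nat) (j : nat) (x v W : R).
Hypothesis a_pos : forall k, (0 < a k)%nat.
Hypothesis x_range : 0 < x <= v.
Hypothesis v_lt_1 : v < 1.
Hypothesis moment_cv : Un_cv (moment_sum a j v) W.

Lemma pow_a_bounds (k : nat) : 0 <= x ^ a k <= v ^ a k /\ v ^ a k <= v.
Proof.
  split; [split; [apply pow_le | apply pow_incr]; lra |].
  apply pow_le_self; [apply a_pos | lra].
Qed.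

Lemma Lfun_tail_bound :
  (forall n, Rabs (Lfun a j x - Lpart a j n x) <= (W - moment_sum a j v n) / (1 - v)) /\
  0 <= Lfun a j x <= W / (1 - v).
Proof.
  set (An := fun k => INR (a k) ^ j * v ^ (a k) / (1 - v)).
  assert (HAn : Un_cv (fun n => sum_f_R0 An n) (W / (1 - v))).
  { apply Un_cv_ext with (fun n => moment_sum a j v n * / (1 - v)).
    { intros n. unfold moment_sum, An. rewrite Rmult_comm, scal_sum. reflexivity. }
    apply CV_mult; [exact moment_cv | apply Un_cv_const]. }
  set (fn := fun k y => INR (a k) ^ j * y ^ (a k) / (1 - y ^ (a k))).
  assert (Hterm : forall k, 0 <= fn k x <= An k).
  { intros k. unfold fn, An. destruct (pow_a_bounds k) as [[H1 H2] H3].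
    assert (0 <= INR (a k) ^ j) by apply pow_le, pos_INR.
    split; [apply Rmult_le_pos; [apply Rmult_le_pos | left; apply Rinv_0_lt_compat]; lra |].
    unfold Rdiv. rewrite !Rmult_assoc. apply Rmult_le_compat_l; [lra |].
    apply Rmult_le_compat; try lra; [left; apply Rinv_0_lt_compat; lra |].
    apply Rinv_le_contravar; lra. }
  assert (Habs : forall k, Rabs (fn k x) <= An k)
    by (intros k; rewrite Rabs_right; [apply Hterm | apply Rle_ge, Hterm]).
  destruct (Rseries_CV_comp (fun k => fn k x) An Hterm (exist _ _ HAn)) as [l Hl].
  replace (Lfun a j x) with l by (symmetry; apply Rlim_Un_cv; exact Hl).
  split; [| split].
  - intros n. replace ((W - moment_sum a j v n) / (1 - v)) with (W / (1 - v) - sum_f_R0 An n).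
    + now apply (sum_maj1 fn An x l (W / (1 - v)) n Hl HAn).
    + replace (sum_f_R0 An n) with (moment_sum a j v n / (1 - v))
        by (unfold moment_sum, An, Rdiv; rewrite Rmult_comm, scal_sum; reflexivity).
      field. lra.
  - apply Rle_cv_lim with (fun _ => 0) (fun n => sum_f_R0 (fun k => fn k x) n); [| apply Un_cv_const | exact Hl].
    intros n. apply cond_pos_sum. intros k. apply Hterm.
  - eapply Rle_trans; [apply Rle_abs | now apply (sum_cv_maj An fn x l (W / (1 - v)) Hl HAn)].
Qed.

(* Consecutive partial products differ by [Fpart * x^(a (S m)) <= a^j v^a], a term of [moment_sum]. *)
Lemma Ffun_tail_bound :
  (forall n, Rabs (Ffun a x - Fpart a n x) <= W - moment_sum a j v n) /\ 0 <= Ffun a x <= 1.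
Proof.
  assert (Hfac : forall i, 0 <= 1 - x ^ (a i) <= 1)
    by (intros i; destruct (pow_a_bounds i) as [[H1 H2] H3]; lra).
  destruct (Un_cv_of_increments_dominated (fun n => Fpart a n x) (moment_sum a j v) W moment_cv)
    as [l [Hl Hb]].
  { intros m. unfold Fpart, moment_sum. simpl prod_f_R0. rewrite tech5.
    destruct (prod_f_R0_unit_interval _ m Hfac).
    destruct (pow_a_bounds (S m)) as [[H1 H2] H3].
    assert (1 <= INR (a (S m)) ^ j)
      by (apply pow_R1_Rle; assert (H4 := a_pos (S m)); apply le_INR in H4; simpl in H4; lra).
    replace (prod_f_R0 (fun k => 1 - x ^ a k) m * (1 - x ^ a (S m)) - prod_f_R0 (fun k => 1 - x ^ a k) m)
      with (- (prod_f_R0 (fun k => 1 - x ^ a k) m * x ^ a (S m))) by ring.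
    rewrite Rabs_Ropp, Rabs_right by (apply Rle_ge, Rmult_le_pos; lra).
    apply Rle_trans with (1 * x ^ a (S m)); [apply Rmult_le_compat_r; lra |].
    replace (_ + _ - _) with (INR (a (S m)) ^ j * v ^ a (S m)) by ring.
    apply Rmult_le_compat; lra. }
  replace (Ffun a x) with l by (symmetry; apply Rlim_Un_cv; exact Hl).
  split; [exact Hb |].
  split; [apply Rle_cv_lim with (fun _ => 0) (fun n => Fpart a n x) |
          apply Rle_cv_lim with (fun n => Fpart a n x) (fun _ => 1)];
    try apply Un_cv_const; try exact Hl; intros n; apply prod_f_R0_unit_interval, Hfac.
Qed.

End InfiniteProduct.

Lemma prod_f_R0_ext (f g : nat -> R) (n : nat) :
  (forall i, (i <= n)%nat -> f i = g i) -> prod_f_R0 f n = prod_f_R0 g n.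
Proof.
  intros Hfg. induction n as [| n IH]; simpl; [apply Hfg; lia |].
  rewrite IH by (intros; apply Hfg; lia). now rewrite Hfg.
Qed.

Lemma prod_f_R0_skip_mul (c : nat -> R) (k n : nat) : (k <= n)%nat ->
  prod_f_R0 (fun i => if Nat.eq_dec i k then 1 else c i) n * c k = prod_f_R0 c n.
Proof.
  induction n as [| n IH]; intros Hk.
  - replace k with 0%nat by lia. simpl. ring.
  - change (prod_f_R0 (fun i => if Nat.eq_dec i k then 1 else c i) n *
      (if Nat.eq_dec (S n) k then 1 else c (S n)) * c k = prod_f_R0 c n * c (S n)).
    destruct (Nat.eq_dec (S n) k) as [<- | Hne].
    + rewrite (prod_f_R0_ext _ c); [ring |].
      intros i Hi. destruct (Nat.eq_dec i (S n)); [lia | reflexivity].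
    + rewrite <- IH by lia. ring.
Qed.

Definition log_pullback (g : R -> R) (x : R) : R := g (- ln x) / x.

(* Under [t = - ln x] each term [exp (- a t)] becomes [x^a], and dividing the full product by
   its [k]-th factor [1 - x^(a k)] restores the skip product. *)
Lemma log_pullback_EU_integrand (a : nat -> nat) (j N : nat) (x : R) :
  (forall k, (0 < a k)%nat) -> (1 <= j)%nat -> 0 < x < 1 ->
  log_pullback (EU_integrand a j N) x =
  / INR (fact (j - 1)) * Lpart a j (N - 1) x * Fpart a (N - 1) x * Rabs (ln x) ^ (j - 1) / x.
Proof.
  intros Ha Hj Hx. unfold log_pullback, Lpart, Fpart.
  rewrite EU_integrand_eq by exact Hj.
  assert (Hln : ln x < 0) by (rewrite <- ln_1; apply ln_increasing; lra).
  assert (Hf := INR_fact_lt_0 (j - 1)).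
  assert (Hpos : forall k, 0 < 1 - x ^ a k).
  { intros k. assert (x ^ a k <= x) by (apply pow_le_self; [apply Ha | lra]). lra. }
  set (P := prod_f_R0 (fun k => 1 - x ^ a k) (N - 1)).
  set (c := Rabs (ln x) ^ (j - 1) / INR (fact (j - 1)) * P).
  transitivity (sum_f_R0 (fun k => INR (a k) ^ j * x ^ a k / (1 - x ^ a k)) (N - 1) * c / x);
    [| unfold c; field; lra].
  f_equal. rewrite (Rmult_comm _ c), scal_sum. apply sum_eq. intros k Hk.
  rewrite (prod_f_R0_ext _ (fun i => if Nat.eq_dec i k then 1 else 1 - x ^ a i)).
  2: { intros i _. unfold skip_factor. destruct (Nat.eq_dec i k); [reflexivity |].
       now rewrite (pow_eq_exp_ln x). }
  assert (Hskip := prod_f_R0_skip_mul (fun i => 1 - x ^ a i) k (N - 1) Hk). fold P in Hskip.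
  specialize (Hpos k).
  replace (prod_f_R0 (fun i => if Nat.eq_dec i k then 1 else 1 - x ^ a i) (N - 1))
    with (P / (1 - x ^ a k)) by (rewrite <- Hskip; field; lra).
  unfold c. rewrite <- (pow_eq_exp_ln x) by lra. rewrite Rabs_left by lra. field. lra.
Qed.

Lemma abs_ln_pow_div_antitone (q : nat) (u x : R) : 0 < u <= x -> x < 1 ->
  0 <= Rabs (ln x) ^ q / (INR (fact q) * x) <= Rabs (ln u) ^ q / (INR (fact q) * u).
Proof.
  intros Hux Hx. assert (Hf := INR_fact_lt_0 q).
  assert (Hln : ln x < 0) by (rewrite <- ln_1; apply ln_increasing; lra).
  assert (Hlnu : ln u <= ln x) by (apply ln_le; lra).
  split.
  - apply Rmult_le_pos; [apply pow_le, Rabs_pos |].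
    left; apply Rinv_0_lt_compat, Rmult_lt_0_compat; lra.
  - unfold Rdiv. apply Rmult_le_compat.
    + apply pow_le, Rabs_pos.
    + left; apply Rinv_0_lt_compat, Rmult_lt_0_compat; lra.
    + apply pow_incr. split; [apply Rabs_pos |]. rewrite !Rabs_left by lra. lra.
    + apply Rinv_le_contravar; [apply Rmult_lt_0_compat; lra | apply Rmult_le_compat_l; lra].
Qed.

(* [Lpart] and [Fpart] are within [O(W - moment_sum)] of their limits, uniformly in [x <= v]. *)
Lemma log_pullback_EU_sub_I_integrand (a : nat -> nat) (j N : nat) (u v W x : R) :
  (forall k, (0 < a k)%nat) -> (1 <= j)%nat -> 0 < u -> u <= x <= v -> v < 1 ->
  Un_cv (moment_sum a j v) W ->
  Rabs (log_pullback (EU_integrand a j N) x - I_integrand a j x) <=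
  Rabs (ln u) ^ (j - 1) / (INR (fact (j - 1)) * u) *
  ((W - moment_sum a j v (N - 1)) * (1 + W) / (1 - v)).
Proof.
  intros Ha Hj Hu Hx Hv HW.
  rewrite log_pullback_EU_integrand by (auto; lra).
  destruct (Lfun_tail_bound a j x v W Ha ltac:(lra) Hv HW) as [HL HLb].
  destruct (Ffun_tail_bound a j x v W Ha ltac:(lra) Hv HW) as [HF HFb].
  specialize (HL (N - 1)%nat). specialize (HF (N - 1)%nat).
  set (L := Lfun a j x) in *. set (F := Ffun a x) in *.
  set (l := Lpart a j (N - 1) x) in *. set (q := Fpart a (N - 1) x) in *.
  set (e := W - moment_sum a j v (N - 1)) in *.
  assert (Hq : 0 <= q <= 1).
  { apply prod_f_R0_unit_interval. intros i.
    destruct (pow_a_bounds a x v Ha ltac:(lra) Hv i) as [[H1 H2] H3]. lra. }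
  assert (He : 0 <= e) by (eapply Rle_trans; [apply Rabs_pos | exact HF]).
  assert (HW0 : 0 <= W).
  { apply Rmult_le_reg_r with (/ (1 - v)); [apply Rinv_0_lt_compat; lra |]. lra. }
  assert (Hf := INR_fact_lt_0 (j - 1)).
  set (c := Rabs (ln x) ^ (j - 1) / (INR (fact (j - 1)) * x)).
  set (c0 := Rabs (ln u) ^ (j - 1) / (INR (fact (j - 1)) * u)).
  assert (Hc : 0 <= c <= c0) by (apply abs_ln_pow_div_antitone; lra).
  replace (/ INR (fact (j - 1)) * l * q * Rabs (ln x) ^ (j - 1) / x - I_integrand a j x)
    with (c * ((l - L) * q + L * (q - F))) by (unfold I_integrand, c; fold L F; field; lra).
  rewrite Rabs_mult, (Rabs_right c) by lra.
  apply Rmult_le_compat; try lra; [apply Rabs_pos |].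
  eapply Rle_trans; [apply Rabs_triang |]. rewrite !Rabs_mult, (Rabs_right q), (Rabs_right L) by lra.
  rewrite Rabs_minus_sym in HL, HF.
  assert (Rabs (l - L) * q <= e / (1 - v))
    by (rewrite <- (Rmult_1_r (e / (1 - v))); apply Rmult_le_compat; try lra; apply Rabs_pos).
  assert (L * Rabs (q - F) <= W / (1 - v) * e) by (apply Rmult_le_compat; try lra; apply Rabs_pos).
  replace (e * (1 + W) / (1 - v)) with (e / (1 - v) + W / (1 - v) * e) by (field; lra).
  lra.
Qed.

Lemma continuous_sum_f_R0 (F : nat -> R -> R) (n : nat) (t : R) :
  (forall k, continuous (F k) t) -> continuous (fun t => sum_f_R0 (fun k => F k t) n) t.
Proof.
  intros HF. induction n as [| n IH]; [apply HF |].
  apply (continuous_plus (fun t => sum_f_R0 (fun k => F k t) n) (F (S n))); [exact IH | apply HF].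
Qed.

Lemma continuous_prod_f_R0 (F : nat -> R -> R) (n : nat) (t : R) :
  (forall k, continuous (F k) t) -> continuous (fun t => prod_f_R0 (fun k => F k t) n) t.
Proof.
  intros HF. induction n as [| n IH]; [apply HF |].
  apply (continuous_mult (fun t => prod_f_R0 (fun k => F k t) n) (F (S n))); [exact IH | apply HF].
Qed.

Lemma EU_integrand_continuous (a : nat -> nat) (j N : nat) (t : R) : continuous (EU_integrand a j N) t.
Proof.
  apply (continuous_sum_f_R0 (fun k t => INR (a k) * exp (- INR (a k) * t) * (INR (a k) * t) ^ (j - 1) /
    INR (fact (j - 1)) * prod_f_R0 (skip_factor a k t) (N - 1))).
  intros k. apply (continuous_mult
    (fun t => INR (a k) * exp (- INR (a k) * t) * (INR (a k) * t) ^ (j - 1) / INR (fact (j - 1)))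
    (fun t => prod_f_R0 (skip_factor a k t) (N - 1))).
  - apply (@ex_derive_continuous R_AbsRing R_NormedModule). auto_derive. auto.
  - apply (continuous_prod_f_R0 (fun i t => skip_factor a k t i)). intros i. unfold skip_factor.
    destruct (Nat.eq_dec i k); [apply continuous_const |].
    apply (@ex_derive_continuous R_AbsRing R_NormedModule). auto_derive. auto.
Qed.

Section LogPullback.

Variable g : R -> R.
Hypothesis g_continuous : forall t, continuous g t.

Lemma log_pullback_continuous (x : R) : 0 < x -> continuous (log_pullback g) x.
Proof.
  intros Hx. unfold log_pullback.
  apply (continuous_mult (fun x => g (- ln x)) (fun x => / x)).
  - apply (continuous_comp (fun x => - ln x) g); [| apply g_continuous].
    apply (@ex_derive_continuous R_AbsRing R_NormedModule). auto_derive. lra.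
  - apply (@ex_derive_continuous R_AbsRing R_NormedModule). auto_derive. lra.
Qed.

Lemma ex_RInt_log_pullback (u v : R) : 0 < u -> u <= v -> ex_RInt (log_pullback g) u v.
Proof.
  intros Hu Huv. apply (@ex_RInt_continuous R_CompleteNormedModule). intros z Hz.
  apply log_pullback_continuous. rewrite Rmin_left in Hz by lra. lra.
Qed.

Lemma RInt_log_pullback (u : R) : 0 < u <= 1 -> RInt (log_pullback g) u 1 = RInt g 0 (- ln u).
Proof.
  intros Hu.
  assert (Hsubst : is_RInt (fun y => scal (- / y) (g (- ln y))) u 1 (RInt g (- ln u) (- ln 1))).
  { apply (@is_RInt_comp R_CompleteNormedModule g (fun y => - ln y) (fun y => - / y) u 1).
    - intros x _. apply g_continuous.
    - intros x Hx. rewrite Rmin_left in Hx by lra. split.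
      + auto_derive; [lra | field; lra].
      + apply (@ex_derive_continuous R_AbsRing R_NormedModule). auto_derive. lra. }
  apply is_RInt_opp in Hsubst. rewrite ln_1, Ropp_0 in Hsubst.
  apply (@is_RInt_unique R_CompleteNormedModule) in Hsubst.
  assert (Hg : ex_RInt g (- ln u) 0)
    by (apply (@ex_RInt_continuous R_CompleteNormedModule); intros; apply g_continuous).
  rewrite <- (@opp_RInt_swap R_CompleteNormedModule g (- ln u) 0 Hg).
  etransitivity; [| exact Hsubst]. apply RInt_ext. intros x Hx. rewrite Rmin_left in Hx by lra.
  unfold log_pullback. change (g (- ln x) / x = - (- / x * g (- ln x))). field. lra.
Qed.

Lemma log_pullback_le_inv_sqrt (K : R) :
  (forall t, 0 <= t -> 0 <= g t <= K * exp (- t / 2)) ->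
  forall x, 0 < x <= 1 -> 0 <= log_pullback g x <= K / sqrt x.
Proof.
  intros HK x Hx.
  assert (Hln : ln x <= 0) by (rewrite <- ln_1; apply ln_le; lra).
  destruct (HK (- ln x) ltac:(lra)) as [Hg0 Hg].
  unfold log_pullback. split; [apply Rmult_le_pos; [lra | left; apply Rinv_0_lt_compat; lra] |].
  replace (exp (- - ln x / 2)) with (sqrt x) in Hg
    by (rewrite <- Rpower_sqrt by lra; unfold Rpower; f_equal; field).
  assert (Hs : 0 < sqrt x) by (apply sqrt_lt_R0; lra).
  assert (Hss : sqrt x * sqrt x = x) by (apply sqrt_sqrt; lra).
  replace (K / sqrt x) with (K * sqrt x / x) by (rewrite <- Hss at 2; field; lra).
  unfold Rdiv. apply Rmult_le_compat_r; [left; apply Rinv_0_lt_compat; lra | exact Hg].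
Qed.

End LogPullback.

Lemma is_RInt_inv_sqrt (a b : R) : 0 < a <= b ->
  is_RInt (fun x => / sqrt x) a b (2 * (sqrt b - sqrt a)).
Proof.
  intros Hab.
  replace (2 * (sqrt b - sqrt a)) with (minus (2 * sqrt b) (2 * sqrt a))
    by (unfold minus, plus, opp; simpl; ring).
  apply (@is_RInt_derive R_CompleteNormedModule (fun x => 2 * sqrt x)); intros x Hx;
    rewrite Rmin_left, Rmax_right in Hx by lra; assert (0 < sqrt x) by (apply sqrt_lt_R0; lra).
  - auto_derive; [lra | field; lra].
  - apply (@ex_derive_continuous R_AbsRing R_NormedModule). auto_derive. lra.
Qed.

Lemma RInt_abs_le_inv_sqrt (f : R -> R) (K a b : R) : 0 < a <= b -> ex_RInt f a b ->
  (forall x, a <= x <= b -> Rabs (f x) <= K / sqrt x) ->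
  Rabs (RInt f a b) <= 2 * K * (sqrt b - sqrt a).
Proof.
  intros Hab Hf Hb.
  apply (norm_RInt_le f (fun x => K * / sqrt x) a b); [lra | exact Hb | now apply (RInt_correct (V := R_CompleteNormedModule)) |].
  replace (2 * K * (sqrt b - sqrt a)) with (scal K (2 * (sqrt b - sqrt a)))
    by (unfold scal; simpl; unfold mult; simpl; ring).
  now apply (@is_RInt_scal R_NormedModule), is_RInt_inv_sqrt.
Qed.

(* [sqrt (lower01 n)] and [1 - upper01 n] are both about [/ (n + 2)]. *)
Definition lower01 (n : nat) : R := / (INR n + 2) ^ 2.
Definition upper01 (n : nat) : R := 1 - / (INR n + 2).

Definition RInt01 (f : R -> R) : R := Rlim (fun n => RInt f (lower01 n) (upper01 n)).

Lemma lower01_spec (n : nat) :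
  0 < lower01 n /\ sqrt (lower01 n) = / (INR n + 2) /\ lower01 n <= / (INR n + 2).
Proof.
  assert (Hn := pos_INR n). unfold lower01. split; [| split].
  - apply Rinv_0_lt_compat, pow_lt; lra.
  - rewrite sqrt_inv, sqrt_pow2 by lra. reflexivity.
  - apply Rinv_le_contravar; [lra | simpl; nra].
Qed.

Lemma upper01_spec (n : nat) : 1 / 2 <= upper01 n < 1 /\ 1 - sqrt (upper01 n) <= / (INR n + 2).
Proof.
  assert (Hn := pos_INR n).
  assert (0 < / (INR n + 2) <= / 2)
    by (split; [apply Rinv_0_lt_compat; lra | apply Rinv_le_contravar; lra]).
  assert (Hs : upper01 n <= sqrt (upper01 n)) by (apply sqrt_ge_self; unfold upper01; lra).
  unfold upper01 in *. split; lra.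
Qed.

Lemma endpoints01_monotone (n m : nat) : (n <= m)%nat -> lower01 m <= lower01 n /\ upper01 n <= upper01 m.
Proof.
  intros Hnm. apply le_INR in Hnm. assert (Hn := pos_INR n). split.
  - unfold lower01. apply Rinv_le_contravar; [apply pow_lt; lra | apply pow_incr; lra].
  - unfold upper01. assert (/ (INR m + 2) <= / (INR n + 2)) by (apply Rinv_le_contravar; lra). lra.
Qed.

Lemma endpoints01_eventually (u v : R) : 0 < u -> v < 1 ->
  exists N, forall m, (N <= m)%nat -> lower01 m <= u /\ v <= upper01 m.
Proof.
  intros Hu Hv. destruct (INR_unbounded (Rmax (/ u) (/ (1 - v)))) as [N HN].
  assert (HM1 := Rmax_l (/ u) (/ (1 - v))). assert (HM2 := Rmax_r (/ u) (/ (1 - v))).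
  exists N. intros m Hm. apply le_INR in Hm. assert (Hm0 := pos_INR N).
  destruct (lower01_spec m) as [_ [_ Hlow]]. split.
  - eapply Rle_trans; [exact Hlow |]. rewrite <- (Rinv_inv u).
    apply Rinv_le_contravar; [apply Rinv_0_lt_compat |]; lra.
  - unfold upper01. assert (/ (INR m + 2) <= 1 - v); [| lra].
    rewrite <- (Rinv_inv (1 - v)). apply Rinv_le_contravar; [apply Rinv_0_lt_compat |]; lra.
Qed.

Section InvSqrtDominated.

Variables (f : R -> R) (K : R).
Hypothesis f_integrable : forall u v, 0 < u -> u <= v -> v < 1 -> ex_RInt f u v.
Hypothesis f_dominated : forall x, 0 < x < 1 -> Rabs (f x) <= K / sqrt x.

Lemma dominating_constant_ge0 : 0 <= K.
Proof.
  assert (H := f_dominated (1 / 2) ltac:(lra)). assert (Hs : 0 < sqrt (1 / 2)) by (apply sqrt_lt_R0; lra).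
  assert (0 <= K / sqrt (1 / 2)) by (eapply Rle_trans; [apply Rabs_pos | exact H]).
  apply Rmult_le_reg_r with (/ sqrt (1 / 2)); [now apply Rinv_0_lt_compat | lra].
Qed.

Lemma RInt_nested_diff (u' u v v' : R) : 0 < u' -> u' <= u -> u <= v -> v <= v' -> v' < 1 ->
  Rabs (RInt f u' v' - RInt f u v) <= 2 * K * (sqrt u + (1 - sqrt v)).
Proof.
  intros H0 H1 H2 H3 H4. assert (HK := dominating_constant_ge0).
  assert (Hbound : forall a b, u' <= a -> a <= b -> b <= v' -> Rabs (RInt f a b) <= 2 * K * (sqrt b - sqrt a)).
  { intros a b Ha Hab Hb. apply RInt_abs_le_inv_sqrt; [lra | apply f_integrable; lra |].
    intros x Hx. apply f_dominated. lra. }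
  assert (E1 := @RInt_Chasles R_CompleteNormedModule f u' u v'
    (f_integrable u' u ltac:(lra) ltac:(lra) ltac:(lra)) (f_integrable u v' ltac:(lra) ltac:(lra) ltac:(lra))).
  assert (E2 := @RInt_Chasles R_CompleteNormedModule f u v v'
    (f_integrable u v ltac:(lra) ltac:(lra) ltac:(lra)) (f_integrable v v' ltac:(lra) ltac:(lra) ltac:(lra))).
  change (RInt f u' u + RInt f u v' = RInt f u' v') in E1.
  change (RInt f u v + RInt f v v' = RInt f u v') in E2.
  assert (B1 := Hbound u' u ltac:(lra) ltac:(lra) ltac:(lra)).
  assert (B2 := Hbound v v' ltac:(lra) ltac:(lra) ltac:(lra)).
  assert (0 <= sqrt u') by apply sqrt_pos.
  assert (sqrt v' <= 1) by (rewrite <- sqrt_1; apply sqrt_le_1_alt; lra).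
  replace (RInt f u' v' - RInt f u v) with (RInt f u' u + RInt f v v') by lra.
  eapply Rle_trans; [apply Rabs_triang |].
  assert (2 * K * (sqrt u - sqrt u') <= 2 * K * sqrt u) by (apply Rmult_le_compat_l; lra).
  assert (2 * K * (sqrt v' - sqrt v) <= 2 * K * (1 - sqrt v)) by (apply Rmult_le_compat_l; lra).
  lra.
Qed.

Lemma RInt01_Un_cv : Un_cv (fun n => RInt f (lower01 n) (upper01 n)) (RInt01 f).
Proof.
  assert (HK := dominating_constant_ge0).
  set (s := fun n => RInt f (lower01 n) (upper01 n)).
  assert (Hstep : forall n m, (n <= m)%nat -> Rabs (s m - s n) <= 4 * K * / (INR n + 2)).
  { intros n m Hnm. destruct (endpoints01_monotone n m Hnm).
    destruct (lower01_spec m) as [Hm0 _]. destruct (upper01_spec m) as [[_ Hm1] _].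
    destruct (lower01_spec n) as [_ [Hn0 _]]. destruct (upper01_spec n) as [[Hn1 _] Hn2].
    assert (/ (INR n + 2) <= / 2) by (apply Rinv_le_contravar; [lra | assert (Hn := pos_INR n); lra]).
    assert (lower01 n <= upper01 n) by (destruct (lower01_spec n) as [_ [_ ?]]; lra).
    eapply Rle_trans; [apply RInt_nested_diff; lra |]. rewrite Hn0.
    replace (4 * K * / (INR n + 2)) with (2 * K * (2 * / (INR n + 2))) by ring.
    apply Rmult_le_compat_l; lra. }
  assert (Hcauchy : Cauchy_crit s).
  { intros eps Heps. destruct (INR_unbounded (4 * K / eps)) as [N HN].
    assert (Hsmall : forall n m, (N <= n)%nat -> (n <= m)%nat -> Rabs (s m - s n) < eps).
    { intros n m Hn Hnm. eapply Rle_lt_trans; [now apply Hstep |].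
      apply le_INR in Hn. assert (0 <= INR N) by apply pos_INR.
      apply Rmult_lt_reg_r with (INR n + 2); [lra |]. rewrite Rmult_assoc, Rinv_l by lra.
      assert (4 * K < eps * INR N).
      { assert (eps * (4 * K / eps) = 4 * K) by (field; lra).
        assert (eps * (INR N - 4 * K / eps) > 0) by (apply Rmult_gt_0_compat; lra). nra. }
      nra. }
    exists N. intros n m Hn Hm. unfold Rdist.
    destruct (Nat.le_ge_cases n m); [rewrite Rabs_minus_sym |]; apply Hsmall; lia. }
  destruct (Rcomplete.R_complete s Hcauchy) as [l Hl].
  unfold RInt01. fold s. now rewrite (Rlim_Un_cv s l Hl).
Qed.

Lemma RInt01_approx (u v : R) : 0 < u -> u <= v -> v < 1 ->
  Rabs (RInt f u v - RInt01 f) <= 2 * K * (sqrt u + (1 - sqrt v)).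
Proof.
  intros Hu Huv Hv. apply Rle_plus_epsilon. intros eps Heps.
  destruct (RInt01_Un_cv eps Heps) as [N1 HN1].
  destruct (endpoints01_eventually u v Hu Hv) as [N2 HN2].
  set (m := Nat.max N1 N2).
  specialize (HN1 m ltac:(unfold m; lia)). destruct (HN2 m ltac:(unfold m; lia)) as [Hlow Hup].
  unfold Rdist in HN1.
  destruct (lower01_spec m) as [Hm0 _]. destruct (upper01_spec m) as [[_ Hm1] _].
  assert (Hnest := RInt_nested_diff (lower01 m) u v (upper01 m) Hm0 Hlow Huv Hup Hm1).
  replace (RInt f u v - RInt01 f) with
    ((RInt f (lower01 m) (upper01 m) - RInt01 f) - (RInt f (lower01 m) (upper01 m) - RInt f u v)) by ring.
  eapply Rle_trans; [apply Rabs_triang |]. rewrite Rabs_Ropp. lra.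
Qed.

Lemma improper_int_RInt01 : improper_int f 0 1 (RInt01 f).
Proof.
  assert (HK := dominating_constant_ge0).
  intros eps Heps. set (s := eps / (4 * K + 1)).
  assert (Hs0 : 0 < s) by (unfold s; apply Rdiv_lt_0_compat; lra).
  assert (Hs : 4 * K * s < eps).
  { unfold s. apply Rmult_lt_reg_r with (4 * K + 1); [lra |]. unfold Rdiv.
    rewrite Rmult_assoc, (Rmult_assoc eps), Rinv_l by lra. nra. }
  exists (Rmin (Rmin (1 / 2) s) (s * s)).
  assert (Hd1 := Rmin_l (Rmin (1 / 2) s) (s * s)). assert (Hd2 := Rmin_r (Rmin (1 / 2) s) (s * s)).
  assert (Hd3 := Rmin_l (1 / 2) s). assert (Hd4 := Rmin_r (1 / 2) s).
  split; [repeat apply Rmin_glb_lt; nra |].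
  intros u v Hu1 Hu2 Hv1 Hv2 Huv.
  exists (ex_RInt_Reals_0 _ _ _ (f_integrable u v ltac:(lra) Huv ltac:(lra))). rewrite <- RInt_Reals.
  eapply Rle_lt_trans; [apply RInt01_approx; lra |].
  assert (Hsu : sqrt u < s) by (rewrite <- (sqrt_square s) by lra; apply sqrt_lt_1_alt; lra).
  assert (Hsv := sqrt_ge_self v ltac:(lra)).
  apply Rle_lt_trans with (2 * K * (s + s)); [apply Rmult_le_compat_l; lra | lra].
Qed.

End InvSqrtDominated.

Lemma RInt01_approx_closed (f : R -> R) (K : R) :
  (forall a b, 0 < a -> a <= b -> b <= 1 -> ex_RInt f a b) ->
  (forall x, 0 < x <= 1 -> Rabs (f x) <= K / sqrt x) ->
  forall u, 0 < u < 1 -> Rabs (RInt f u 1 - RInt01 f) <= 2 * K * sqrt u.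
Proof.
  intros Hint Hdom u Hu.
  assert (Hint' : forall a b, 0 < a -> a <= b -> b < 1 -> ex_RInt f a b) by (intros; apply Hint; lra).
  assert (Hdom' : forall x, 0 < x < 1 -> Rabs (f x) <= K / sqrt x) by (intros; apply Hdom; lra).
  assert (HK := dominating_constant_ge0 f K Hdom').
  apply Rle_plus_epsilon. intros eps Heps.
  set (v := Rmax u (1 - eps / (4 * K + 1))).
  assert (Hv1 : u <= v) by apply Rmax_l.
  assert (Hv2 : 1 - eps / (4 * K + 1) <= v) by apply Rmax_r.
  assert (He : 0 < eps / (4 * K + 1)) by (apply Rdiv_lt_0_compat; lra).
  assert (Hv3 : v < 1) by (unfold v, Rmax; destruct Rle_dec; lra).
  assert (Hleft := RInt01_approx f K Hint' Hdom' u v ltac:(lra) Hv1 Hv3).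
  assert (Hright : Rabs (RInt f v 1) <= 2 * K * (sqrt 1 - sqrt v))
    by (apply RInt_abs_le_inv_sqrt; [lra | apply Hint; lra | intros x Hx; apply Hdom; lra]).
  rewrite sqrt_1 in Hright.
  rewrite <- (@RInt_Chasles R_CompleteNormedModule f u v 1 (Hint u v ltac:(lra) Hv1 ltac:(lra))
    (Hint v 1 ltac:(lra) ltac:(lra) ltac:(lra))).
  change (Rabs (RInt f u v + RInt f v 1 - RInt01 f) <= 2 * K * sqrt u + eps).
  assert (Hsv := sqrt_ge_self v ltac:(lra)).
  assert (4 * K * (1 - v) <= eps).
  { apply Rle_trans with (4 * K * (eps / (4 * K + 1))); [apply Rmult_le_compat_l; lra |].
    apply Rmult_le_reg_r with (4 * K + 1); [lra |]. unfold Rdiv.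
    rewrite Rmult_assoc, (Rmult_assoc eps), Rinv_l by lra. nra. }
  replace (RInt f u v + RInt f v 1 - RInt01 f) with ((RInt f u v - RInt01 f) + RInt f v 1) by ring.
  eapply Rle_trans; [apply Rabs_triang |].
  assert (4 * K * (1 - sqrt v) <= 4 * K * (1 - v)) by (apply Rmult_le_compat_l; lra).
  lra.
Qed.

Lemma improper_int_inf_log_pullback (g : R -> R) (K : R) :
  (forall t, continuous g t) -> (forall t, 0 <= t -> 0 <= g t <= K * exp (- t / 2)) ->
  improper_int_inf g 0 (RInt01 (log_pullback g)).
Proof.
  intros Hg HK.
  assert (Hdom : forall x, 0 < x <= 1 -> Rabs (log_pullback g x) <= K / sqrt x).
  { intros x Hx. destruct (log_pullback_le_inv_sqrt g K HK x Hx). rewrite Rabs_right; lra. }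
  assert (HK0 : 0 <= K).
  { apply (dominating_constant_ge0 (log_pullback g)). intros x Hx. apply Hdom. lra. }
  intros eps Heps. set (e := eps / (2 * K + 1)).
  assert (He : 0 < e) by (unfold e; apply Rdiv_lt_0_compat; lra).
  exists (1 + 2 * Rabs (ln e)). intros T HT HT0.
  assert (HT1 : 1 <= T) by (assert (0 <= Rabs (ln e)) by apply Rabs_pos; lra).
  exists (ex_RInt_Reals_0 _ _ _ ((@ex_RInt_continuous R_CompleteNormedModule) g 0 T (fun x _ => Hg x))).
  rewrite <- RInt_Reals.
  set (u := exp (- T)).
  assert (Hu : 0 < u < 1) by (split; [apply exp_pos | apply exp_lt_1; lra]).
  replace T with (- ln u) at 1 by (unfold u; rewrite ln_exp; ring).
  rewrite <- RInt_log_pullback by (auto; lra).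
  eapply Rle_lt_trans.
  { apply (RInt01_approx_closed _ K); [| exact Hdom | exact Hu].
    intros a b Ha Hab _. now apply ex_RInt_log_pullback. }
  unfold u. rewrite sqrt_exp.
  assert (Hlt : exp (- T / 2) < e).
  { rewrite <- (exp_ln e) by lra. apply exp_increasing.
    assert (Habs := Rle_abs (- ln e)). rewrite Rabs_Ropp in Habs. lra. }
  assert (0 < exp (- T / 2)) by apply exp_pos.
  assert ((2 * K + 1) * e = eps) by (unfold e; field; lra).
  nra.
Qed.

Lemma RInt_uniform_limit (fs : nat -> R -> R) (g : R -> R) (u v : R) (d : nat -> R) :
  u <= v -> (forall N, ex_RInt (fs N) u v) ->
  (forall N x, u <= x <= v -> Rabs (fs N x - g x) <= d N) -> Un_cv d 0 ->
  ex_RInt g u v /\ Un_cv (fun N => RInt (fs N) u v) (RInt g u v).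
Proof.
  intros Huv Hint Hb Hd.
  (* Clamping to [u, v] turns the uniform bound on [u, v] into a uniform limit on all of [R]. *)
  set (clamp := fun x => Rmax u (Rmin v x)).
  assert (Hclamp_in : forall x, u <= clamp x <= v)
    by (intros x; unfold clamp, Rmax, Rmin; repeat destruct Rle_dec; lra).
  assert (Hclamp_id : forall x, u <= x <= v -> clamp x = x)
    by (intros x Hx; unfold clamp, Rmax, Rmin; repeat destruct Rle_dec; lra).
  set (fc := fun N x => fs N (clamp x)). set (gc := fun x => g (clamp x)).
  assert (Hfc : forall N, is_RInt (fc N) u v (RInt (fs N) u v)).
  { intros N. apply (is_RInt_ext (fs N)).
    - intros x Hx. rewrite Rmin_left, Rmax_right in Hx by lra. unfold fc. rewrite Hclamp_id by lra. reflexivity.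
    - apply (RInt_correct (V := R_CompleteNormedModule)), Hint. }
  assert (Hlim : filterlim fc eventually (locally (T := fct_UniformSpace R R_CompleteNormedModule) gc)).
  { apply filterlim_locally. intros eps. destruct (Hd eps (cond_pos eps)) as [N0 HN0].
    exists N0. intros N HN t. specialize (HN0 N HN). unfold Rdist in HN0. rewrite Rminus_0_r in HN0.
    change (Rabs (fc N t - gc t) < eps). unfold fc, gc.
    eapply Rle_lt_trans; [apply Hb, Hclamp_in |]. eapply Rle_lt_trans; [apply Rle_abs | exact HN0]. }
  destruct (filterlim_RInt fc u v eventually eventually_filter gc (fun N => RInt (fs N) u v) Hfc Hlim)
    as [Ig [HIg HgI]].
  assert (Hg : is_RInt g u v Ig).
  { apply (is_RInt_ext gc); [| exact HgI].
    intros x Hx. rewrite Rmin_left, Rmax_right in Hx by lra. unfold gc. now rewrite Hclamp_id by lra. }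
  split; [now exists Ig |].
  rewrite (is_RInt_unique (V := R_CompleteNormedModule) g u v Ig Hg).
  intros eps Heps. apply filterlim_locally with (eps := mkposreal eps Heps) in HIg.
  destruct HIg as [N0 HN0]. exists N0. intros n Hn. exact (HN0 n Hn).
Qed.

Lemma RInt01_cv (fs : nat -> R -> R) (f : R -> R) (K : R) (N0 : nat) :
  (forall N u v, (N0 <= N)%nat -> 0 < u -> u <= v -> v < 1 -> ex_RInt (fs N) u v) ->
  (forall N x, (N0 <= N)%nat -> 0 < x < 1 -> Rabs (fs N x) <= K / sqrt x) ->
  (forall u v, 0 < u -> u <= v -> v < 1 -> ex_RInt f u v) ->
  (forall x, 0 < x < 1 -> Rabs (f x) <= K / sqrt x) ->
  (forall u v, 0 < u -> u <= v -> v < 1 -> Un_cv (fun N => RInt (fs N) u v) (RInt f u v)) ->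
  Un_cv (fun N => RInt01 (fs N)) (RInt01 f).
Proof.
  intros Hfs_int Hfs_dom Hf_int Hf_dom Hcv.
  assert (HK := dominating_constant_ge0 f K Hf_dom).
  intros eps Heps.
  set (s := Rmin (1 / 2) (eps / (16 * K + 1))).
  assert (Hs0 : 0 < s) by (unfold s; apply Rmin_glb_lt; [lra | apply Rdiv_lt_0_compat; lra]).
  assert (Hs1 : s <= 1 / 2) by apply Rmin_l.
  assert (Hs2 : s <= eps / (16 * K + 1)) by apply Rmin_r.
  set (u := s * s). set (v := 1 - s).
  assert (Hu0 : 0 < u) by (unfold u; nra).
  assert (Huv : u <= v) by (unfold u, v; nra).
  assert (Hv1 : v < 1) by (unfold v; lra).
  assert (Herr : 2 * K * (sqrt u + (1 - sqrt v)) <= 4 * K * s).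
  { assert (Hsu : sqrt u = s) by (unfold u; apply sqrt_square; lra).
    assert (Hsv := sqrt_ge_self v ltac:(unfold v; lra)).
    rewrite Hsu. replace (4 * K * s) with (2 * K * (s + s)) by ring.
    apply Rmult_le_compat_l; [lra |]. unfold v in *. lra. }
  assert (H8 : 8 * K * s < eps / 2).
  { apply Rle_lt_trans with (8 * K * (eps / (16 * K + 1))); [apply Rmult_le_compat_l; lra |].
    apply Rmult_lt_reg_r with (16 * K + 1); [lra |]. unfold Rdiv.
    rewrite Rmult_assoc, (Rmult_assoc eps), Rinv_l by lra. nra. }
  destruct (Hcv u v Hu0 Huv Hv1 (eps / 2) ltac:(lra)) as [N1 HN1].
  exists (Nat.max N1 N0). intros N HN.
  specialize (HN1 N ltac:(lia)). unfold Rdist in *.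
  assert (HfsN := RInt01_approx (fs N) K (fun a b => Hfs_int N a b ltac:(lia))
    (fun x => Hfs_dom N x ltac:(lia)) u v Hu0 Huv Hv1).
  assert (Hf := RInt01_approx f K Hf_int Hf_dom u v Hu0 Huv Hv1).
  replace (RInt01 (fs N) - RInt01 f) with
    (- (RInt (fs N) u v - RInt01 (fs N)) + (RInt (fs N) u v - RInt f u v) + (RInt f u v - RInt01 f))
    by ring.
  eapply Rle_lt_trans; [apply Rabs_triang |].
  eapply Rle_lt_trans; [apply Rplus_le_compat_r, Rabs_triang |].
  rewrite Rabs_Ropp. lra.
Qed.

Lemma countA_le_pow (a : nat -> nat) (nu C : R) : 0 < nu ->
  (forall m n, (1 <= m)%nat -> INR (countA a m n) <= C * Rpower (INR m) nu) ->
  exists p : nat, 0 <= C /\ forall m n, (1 <= m)%nat -> INR (countA a m n) <= C * INR m ^ p.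
Proof.
  intros Hnu Hcount.
  assert (HC : 0 <= C).
  { specialize (Hcount 1%nat 0%nat (le_n 1)). unfold countA in Hcount. simpl in Hcount.
    unfold Rpower in Hcount. rewrite ln_1, Rmult_0_r, exp_0 in Hcount. lra. }
  destruct (INR_unbounded nu) as [p Hp]. exists p. split; [exact HC |].
  intros m n Hm. eapply Rle_trans; [now apply Hcount |]. apply Rmult_le_compat_l; [exact HC |].
  apply le_INR in Hm. simpl in Hm. rewrite <- Rpower_pow by lra. apply Rle_Rpower; lra.
Qed.

Lemma Un_cv_pred (w : nat -> R) (W : R) : Un_cv w W -> Un_cv (fun N => w (N - 1)%nat) W.
Proof.
  intros Hw eps Heps. destruct (Hw eps Heps) as [N0 HN0]. exists (S N0). intros n Hn. apply HN0. lia.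
Qed.

Section CouponLimit.

Variables (a : nat -> nat) (C : R) (p j : nat).
Hypothesis a_pos : forall k, (0 < a k)%nat.
Hypothesis C_ge0 : 0 <= C.
Hypothesis countA_le : forall m n, (1 <= m)%nat -> INR (countA a m n) <= C * INR m ^ p.
Hypothesis j_ge1 : (1 <= j)%nat.

Lemma log_pullback_EU_cv_uniform (u v : R) : 0 < u -> u <= v -> v < 1 ->
  exists d, Un_cv d 0 /\ forall N x, u <= x <= v ->
    Rabs (log_pullback (EU_integrand a j N) x - I_integrand a j x) <= d N.
Proof.
  intros Hu Huv Hv.
  destruct (moment_sum_cv a C p C_ge0 countA_le j v j_ge1 ltac:(lra)) as [W HW].
  set (c0 := Rabs (ln u) ^ (j - 1) / (INR (fact (j - 1)) * u)).
  exists (fun N => c0 * ((W - moment_sum a j v (N - 1)) * (1 + W) / (1 - v))). split.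
  - replace 0 with (c0 * ((W - W) * (1 + W) / (1 - v))) by (field; lra).
    apply CV_mult; [apply Un_cv_const |].
    apply (CV_mult _ (fun _ => / (1 - v))); [| apply Un_cv_const].
    apply (CV_mult _ (fun _ => 1 + W)); [| apply Un_cv_const].
    apply CV_minus; [apply Un_cv_const | now apply Un_cv_pred].
  - intros N x Hx. now apply log_pullback_EU_sub_I_integrand.
Qed.

Lemma RInt_log_pullback_EU_cv (u v : R) : 0 < u -> u <= v -> v < 1 ->
  ex_RInt (I_integrand a j) u v /\
  Un_cv (fun N => RInt (log_pullback (EU_integrand a j N)) u v) (RInt (I_integrand a j) u v).
Proof.
  intros Hu Huv Hv. destruct (log_pullback_EU_cv_uniform u v Hu Huv Hv) as [d [Hd Hb]].
  apply (RInt_uniform_limit _ _ u v d Huv); [| exact Hb | exact Hd].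
  intros N. apply ex_RInt_log_pullback; [apply EU_integrand_continuous | exact Hu | exact Huv].
Qed.

Lemma I_integrand_le_inv_sqrt (K : R) (N0 : nat) :
  (forall N x, (N0 <= N)%nat -> 0 < x < 1 -> Rabs (log_pullback (EU_integrand a j N) x) <= K / sqrt x) ->
  forall x, 0 < x < 1 -> Rabs (I_integrand a j x) <= K / sqrt x.
Proof.
  intros Hdom x Hx.
  destruct (log_pullback_EU_cv_uniform x x ltac:(lra) ltac:(lra) ltac:(lra)) as [d [Hd Hb]].
  assert (Hcv : Un_cv (fun N => log_pullback (EU_integrand a j N) x) (I_integrand a j x)).
  { intros eps Heps. destruct (Hd eps Heps) as [N1 HN1]. exists N1. intros n Hn.
    specialize (HN1 n Hn). unfold Rdist in *. rewrite Rminus_0_r in HN1.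
    eapply Rle_lt_trans; [apply Hb; lra |]. eapply Rle_lt_trans; [apply Rle_abs | exact HN1]. }
  apply cv_cvabs, (CV_shift' _ N0) in Hcv.
  eapply Rle_cv_lim; [| exact Hcv | apply Un_cv_const]. intros n. apply Hdom; [lia | exact Hx].
Qed.

End CouponLimit.

Theorem corollary2 :
  forall a : nat -> nat,
    (forall k, (0 < a k)%nat) ->
    (exists nu C : R, 0 < nu /\
       forall m n : nat, (1 <= m)%nat -> INR (countA a m n) <= C * Rpower (INR m) nu) ->
    forall j : nat, (2 <= j)%nat ->
    forall xa : R, is_x_alpha a xa ->
    exists (EU : nat -> R) (I : R),
      (forall N : nat, (2 <= N)%nat -> improper_int_inf (EU_integrand a j N) 0 (EU N)) /\
      Un_cv EU I /\
      improper_int (I_integrand a j) 0 xa I.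
Proof.
  intros a Ha [nu [C0 [Hnu Hgrowth]]] j Hj xa Hxa.
  destruct (countA_le_pow a nu C0 Hnu Hgrowth) as [p [HC Hcount]].
  rewrite (x_alpha_eq_1 a C0 p Ha HC Hcount xa Hxa).
  destruct (EU_integrand_exp_dominated_uniform a C0 p HC Hcount j Hj) as [K [HK Hexp]].
  assert (Hdom : forall N x, (S (p + j) <= N)%nat -> 0 < x < 1 ->
    Rabs (log_pullback (EU_integrand a j N) x) <= K / sqrt x).
  { intros N x HN Hx. destruct (log_pullback_le_inv_sqrt (EU_integrand a j N) K) with x as [H0 H1];
      [intros t Ht; split; [apply EU_integrand_ge0; [lia | lra] | now apply Hexp] | lra |].
    rewrite Rabs_right; lra. }
  assert (HIint : forall u v, 0 < u -> u <= v -> v < 1 -> ex_RInt (I_integrand a j) u v)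
    by (intros u v Hu Huv Hv; apply (RInt_log_pullback_EU_cv a C0 p); auto; lia).
  assert (HIdom := I_integrand_le_inv_sqrt a C0 p j Ha HC Hcount ltac:(lia) K _ Hdom).
  exists (fun N => RInt01 (log_pullback (EU_integrand a j N))), (RInt01 (I_integrand a j)).
  split; [| split].
  - intros N _. destruct (EU_integrand_exp_dominated a C0 p HC Hcount j N ltac:(lia)) as [KN [_ HN]].
    apply (improper_int_inf_log_pullback _ KN); [apply EU_integrand_continuous |].
    intros t Ht. split; [apply EU_integrand_ge0; [lia | lra] | now apply HN].
  - apply (RInt01_cv _ _ K (S (p + j))); [| exact Hdom | exact HIint | exact HIdom |].
    + intros N u v _ Hu Huv _. apply ex_RInt_log_pullback; [apply EU_integrand_continuous | lra | lra].
    + intros u v Hu Huv Hv. apply (RInt_log_pullback_EU_cv a C0 p); auto; lia.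
  - exact (improper_int_RInt01 _ K HIint HIdom).
Qed.
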